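(* Let $M$ be a connected matroid on $E$ and $S\subseteq E$ such that $M|_S$ is connected. Write $M/S=\bigoplus_i N_i$ where each $N_i$ is a connected matroid on a set $A_i$ (so the $A_i$ are the connected components of $M/S$). Then for each $i$, $M|_{A_i\cup S}$ is connected.
   Context: A matroid is connected if it is not a direct sum of two matroids on nonempty ground sets. $M|_S$ is the restriction to $S$ and $M/S$ is the contraction, the matroid on $E-S$ with $\mathrm{rk}_{M/S}(A)=\mathrm{rk}(A\cup S)-\mathrm{rk}(S)$. *)

(* Matroids on a finite ground set E : {set T}, given by a
   rank function rk : {set T} -> nat (only its values on subsets of E matter). *)
From mathcomp Require Import all_boot.
Set Implicit Arguments. Unset Strict Implicit. Unset Printing Implicit Defensive.

Section Matroid.
Variable T : finType.

Definition is_matroid (E : {set T}) (rk : {set T} -> nat) : Prop :=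
  [/\ forall X : {set T}, X \subset E -> rk X <= #|X|,
      forall X Y : {set T}, X \subset Y -> Y \subset E -> rk X <= rk Y &
      forall X Y : {set T}, X \subset E -> Y \subset E ->
        rk (X :|: Y) + rk (X :&: Y) <= rk X + rk Y].

Definition is_direct_sum (E : {set T}) (rk : {set T} -> nat) (A B : {set T}) : Prop :=
  [/\ A :|: B = E, [disjoint A & B] &
      forall X : {set T}, X \subset E -> rk X = rk (X :&: A) + rk (X :&: B)].

Definition connected (E : {set T}) (rk : {set T} -> nat) : Prop :=
  ~ exists A B : {set T}, [/\ A != set0, B != set0 & is_direct_sum E rk A B].

(* Restriction M|_S has ground set S and the same rank function.
   Contraction M/S has ground set E :\: S and rank function: *)
Definition contr_rk (rk : {set T} -> nat) (S : {set T}) : {set T} -> nat :=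
  fun X => rk (X :|: S) - rk S.

End Matroid.

(* Since M|_S is connected, a separation (X, Y) of M|_(A u S) puts all of S on
   one side, say S <= X, so Y <= A.  The component A of M/S is a separator of
   M/S, and comparing rk(Z u S) computed through this separator with the
   separation of M|_(A u S) yields rk Z >= rk (Z n Y) + rk (Z \ Y) for every
   Z <= E.  Hence Y separates M, contradicting the connectedness of M. *)
From mathcomp Require Import all_boot.
From mathcomp Require Import zify.

Set Implicit Arguments.
Unset Strict Implicit.
Unset Printing Implicit Defensive.

Ltac set_solver :=
  let x := fresh "x" in
  first [apply/setP => x | apply/subsetP => x];
  repeat match goal with
  | H : is_true (_ \subset _) |- _ => move/subsetP/(_ x)/implyP: H
  | H : is_true [disjoint _ & _] |- _ =>
      move: H; rewrite -setI_eq0 => /eqP/setP/(_ x)/eqP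
  | H : _ = _ |- _ => move/setP/(_ x)/eqP: H
  end;
  rewrite ?inE;
  repeat match goal with |- context [x \in ?B] => case: (x \in B) end;
  by [].

Section DirectSum.
Variable T : finType.
Implicit Types (E F A B X Y Z : {set T}) (f : {set T} -> nat).

Lemma is_direct_sum_sym E f A B : is_direct_sum E f A B -> is_direct_sum E f B A.
Proof.
case=> hAB hdis hf; split; [by rewrite setUC | by rewrite disjoint_sym |].
by move=> Z hZ; rewrite addnC hf.
Qed.

Lemma is_direct_sum_restr E F f A B :
  F \subset E -> is_direct_sum E f A B -> is_direct_sum F f (F :&: A) (F :&: B).
Proof.
move=> hFE [hAB hdis hf]; split.
- by set_solver.
- by rewrite -setI_eq0; apply/eqP; set_solver.
- move=> Z hZ; rewrite hf ?(subset_trans hZ hFE) //.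
  by rewrite !setIA (setIidPl hZ).
Qed.

Lemma connected_sub_summand E F f A B :
  connected F f -> F \subset E -> is_direct_sum E f A B ->
  F \subset A \/ F \subset B.
Proof.
move=> hF hFE hAB; have [hA _ _] := hAB.
case: (eqVneq (F :&: B) set0) => hFB; first by left; set_solver.
case: (eqVneq (F :&: A) set0) => hFA; first by right; set_solver.
by case: hF; exists (F :&: A), (F :&: B); split; last exact: is_direct_sum_restr hAB.
Qed.

Lemma partition_block_direct_sum F f (P : {set {set T}}) A :
  partition P F -> f set0 = 0 ->
  (forall X, X \subset F -> f X = \sum_(B in P) f (X :&: B)) ->
  A \in P -> is_direct_sum F f A (F :\: A).
Proof.
move=> /and3P[/eqP hcover /trivIsetP htriv _] f0 hsum hA.
have hAF : A \subset F by rewrite -hcover; exact: bigcup_sup.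
split; [by set_solver | by rewrite -setI_eq0; apply/eqP; set_solver |].
move=> X hX; rewrite hsum // (bigD1 A hA) /=.
rewrite [f (X :&: (F :\: A))]hsum ?(subset_trans (subsetIl _ _) hX) // (bigD1 A hA) /=.
have -> : X :&: (F :\: A) :&: A = set0 by set_solver.
rewrite f0 add0n; congr (_ + _); apply: eq_bigr => B /andP[hB hBA].
have hBF : B \subset F by rewrite -hcover; exact: bigcup_sup.
by have hdisBA := htriv B A hB hA hBA; congr (f _); set_solver.
Qed.

End DirectSum.

Section Matroid.
Variables (T : finType) (E : {set T}) (rk : {set T} -> nat).
Hypothesis rk_matroid : is_matroid E rk.
Implicit Types (S A X Y Z : {set T}).

Lemma rk_set0 : rk set0 = 0.
Proof.
case: rk_matroid => hcard _ _.
by have := hcard set0 (sub0set E); rewrite cards0 leqn0 => /eqP.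
Qed.

Lemma rk_mono X Y : X \subset Y -> Y \subset E -> rk X <= rk Y.
Proof. by case: rk_matroid => _ hmono _; exact: hmono. Qed.

Lemma rk_submod X Y :
  X \subset E -> Y \subset E -> rk (X :|: Y) + rk (X :&: Y) <= rk X + rk Y.
Proof. by case: rk_matroid => _ _ hsub; exact: hsub. Qed.

Lemma rk_le_setI_setD Z Y : Z \subset E -> rk Z <= rk (Z :&: Y) + rk (Z :\: Y).
Proof.
move=> hZ; have := @rk_submod (Z :&: Y) (Z :\: Y).
have -> : Z :&: Y :|: Z :\: Y = Z by set_solver.
have -> : Z :&: Y :&: (Z :\: Y) = set0 by set_solver.
by rewrite rk_set0 addn0; apply; set_solver.
Qed.

Lemma direct_sum_of_rk_superadd Y :
  Y \subset E -> (forall Z, Z \subset E -> rk (Z :&: Y) + rk (Z :\: Y) <= rk Z) ->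
  is_direct_sum E rk Y (E :\: Y).
Proof.
move=> hY hsup; split; [by set_solver | by rewrite -setI_eq0; apply/eqP; set_solver |].
move=> Z hZ; have -> : Z :&: (E :\: Y) = Z :\: Y by set_solver.
by apply/eqP; rewrite eqn_leq rk_le_setI_setD // hsup.
Qed.

Lemma restr_separator_lift S A X Y :
  S \subset E -> is_direct_sum (E :\: S) (contr_rk rk S) A (E :\: S :\: A) ->
  is_direct_sum (A :|: S) rk X Y -> S \subset X -> is_direct_sum E rk Y (E :\: Y).
Proof.
move=> hSE [hAcov _ hAsplit] [hXYcov hXYdis hXYsplit] hSX.
apply: direct_sum_of_rk_superadd; first by set_solver.
move=> Z hZ.
have contr_eq : rk (Z :|: S) + rk S = rk (Z :&: A :|: S) + rk (Z :\: A :|: S).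
  have hZS : Z :\: S \subset E :\: S by set_solver.
  move: (hAsplit _ hZS); rewrite /contr_rk.
  have -> : Z :\: S :|: S = Z :|: S by set_solver.
  have -> : (Z :\: S) :&: A :|: S = Z :&: A :|: S by set_solver.
  have -> : (Z :\: S) :&: (E :\: S :\: A) :|: S = Z :\: A :|: S by set_solver.
  have m1 : rk S <= rk (Z :|: S) by apply: rk_mono; set_solver.
  have m2 : rk S <= rk (Z :&: A :|: S) by apply: rk_mono; set_solver.
  have m3 : rk S <= rk (Z :\: A :|: S) by apply: rk_mono; set_solver.
  lia.
have sep_eq : rk (Z :&: A :|: S) = rk ((Z :&: A :|: S) :&: X) + rk (Z :&: Y).
  by rewrite hXYsplit; [congr (_ + rk _); set_solver | set_solver].
have submod_S :
    rk (Z :\: Y :|: S) + rk S <= rk ((Z :&: A :|: S) :&: X) + rk (Z :\: A :|: S).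
  have := @rk_submod ((Z :&: A :|: S) :&: X) (Z :\: A :|: S).
  have -> : (Z :&: A :|: S) :&: X :|: (Z :\: A :|: S) = Z :\: Y :|: S by set_solver.
  have -> : (Z :&: A :|: S) :&: X :&: (Z :\: A :|: S) = S by set_solver.
  by apply; set_solver.
have submod_Z : rk (Z :|: S) + rk (Z :\: Y) <= rk Z + rk (Z :\: Y :|: S).
  have := @rk_submod Z (Z :\: Y :|: S).
  have -> : Z :|: (Z :\: Y :|: S) = Z :|: S by set_solver.
  have -> : Z :&: (Z :\: Y :|: S) = Z :\: Y by set_solver.
  by apply; set_solver.
lia.
Qed.

End Matroid.

Theorem lemma6p6 (T : finType) (E S : {set T}) (rk : {set T} -> nat)
  (P : {set {set T}}) :
  is_matroid E rk ->
  connected E rk ->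
  S \subset E ->
  connected S rk ->
  partition P (E :\: S) ->
  (forall X : {set T}, X \subset E :\: S ->
     contr_rk rk S X = \sum_(A in P) contr_rk rk S (X :&: A)) ->
  (forall A : {set T}, A \in P -> connected A (contr_rk rk S)) ->
  forall A : {set T}, A \in P -> connected (A :|: S) rk.
Proof.
move=> hM hconn hSE hSconn hP hsum _ A hA [X [Y [hX0 hY0 hXY]]].
have hAsep : is_direct_sum (E :\: S) (contr_rk rk S) A (E :\: S :\: A).
  by apply: partition_block_direct_sum hP _ hsum hA; rewrite /contr_rk set0U subnn.
wlog hSX : X Y hX0 hY0 hXY / S \subset X.
  move=> wlog_sep.
  case: (connected_sub_summand hSconn (subsetUr A S) hXY) => hS.
  - exact: wlog_sep hXY hS.
  - exact: wlog_sep (is_direct_sum_sym hXY) hS.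
apply: hconn; exists Y, (E :\: Y); split => //.
- apply: subset_neq0 hX0; case: hAsep hXY => hAcov _ _ [hXYcov hXYdis _].
  by set_solver.
- exact: restr_separator_lift hSE hAsep hXY hSX.
Qed.
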